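(* Let $n\ge2$ and let $A=(a_{ij})$ be a real $n\times n$ matrix, and $q>0$. Then $$|A_q|=\frac{|(A^1_1)_q|\,|(A^n_n)_q|-q^{\,n-1}\,|(A^1_n)_q|\,|(A^n_1)_q|}{|(A^{1n}_{1n})_q|},$$ provided $|(A^{1n}_{1n})_q|\ne0$.
   Context: $|\cdot|$ denotes the determinant, and the determinant of the empty $0\times0$ matrix is $1$. For an $m\times m$ matrix $M=(m_{ij})$ and $q>0$, $M_q=(q^{(i-j)^2/2}m_{ij})_{i,j=1}^m$, where indices are always the positions $1,\dots,m$ in $M$. $A^i_j$ denotes the $(n-1)\times(n-1)$ matrix obtained from $A$ by deleting row $i$ and column $j$ (reindexed from $1$), and $A^{1n}_{1n}$ the $(n-2)\times(n-2)$ matrix obtained by deleting rows $1,n$ and columns $1,n$. *)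

(* Real numbers are modelled by an arbitrary real closed field R. *)
From HB Require Import structures.
From mathcomp Require Import all_boot all_order all_algebra.
Set Implicit Arguments. Unset Strict Implicit. Unset Printing Implicit Defensive.
Import Order.TTheory GRing.Theory Num.Theory.
Local Open Scope ring_scope.

Definition natdist (i j : nat) : nat := if (i <= j)%N then (j - i)%N else (i - j)%N.

(* M_q = (q^{(i-j)^2/2} m_ij); q^{k/2} is written (sqrt q)^k. *)
Definition qmx (R : rcfType) (m : nat) (q : R) (M : 'M[R]_m) : 'M[R]_m :=
  \matrix_(i < m, j < m) (Num.sqrt q ^+ (natdist i j ^ 2)%N * M i j).

(* For an (n+2)x(n+2) matrix A, the minors used in the statement. Positions
   1 and n of the paper are ord0 and ord_max (0-based). *)
Definition minor (R : rcfType) (m : nat) (A : 'M[R]_m.+1) (i j : 'I_m.+1) : 'M[R]_m :=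
  row' i (col' j A).

Definition minor1n (R : rcfType) (m : nat) (A : 'M[R]_m.+2) : 'M[R]_m :=
  row' ord0 (col' ord0 (row' ord_max (col' ord_max A))).

From HB Require Import structures.
From mathcomp Require Import all_boot all_order all_algebra ring zify.
From mathcomp Require Import fingroup perm.
Import Order.TTheory GRing.Theory Num.Theory.
Local Open Scope ring_scope.
Set Implicit Arguments. Unset Strict Implicit. Unset Printing Implicit Defensive.

(* The theorem is the Desnanot-Jacobi (Dodgson condensation) identity
     |B| |B^{1n}_{1n}| = |B^1_1| |B^n_n| - |B^1_n| |B^n_1|
   applied to B = A_q, combined with the way the q-weighting interacts with
   the four corner minors.
   - Desnanot-Jacobi is proved over an arbitrary field, assuming the inner
     minor D = B^{1n}_{1n} is invertible, via Schur complements: reordering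
     rows and columns as (1, n, 2..n-1) puts D in the lower right corner, so
     |B| = |S| |D| for the 2x2 Schur complement S = (s_ab), a, b in {1, n};
     each (n-1)x(n-1) corner minor, reordered likewise, is a matrix bordered
     by one row a and one column b around D, whose determinant is s_ab |D|.
   - Deleting row and column 1 (or row and column n) of A commutes with the
     weighting M |-> M_q, while for the off-diagonal minors the weights differ
     by diagonal factors q^{(2i+1)/2} and q^{j}, which give
     |(A_q)^1_n| = q^{(n-1)/2} |(A^1_n)_q| and likewise for (A_q)^n_1.
   The main theorem then follows by dividing by |D| = |(A^{1n}_{1n})_q|. *)

Lemma det_mxsub_perm (F : comUnitRingType) (n : nat) (f g : 'I_n -> 'I_n)
    (f_inj : injective f) (g_inj : injective g) (M : 'M[F]_n) :
  \det (mxsub f g M) = (-1) ^+ perm f_inj * (-1) ^+ perm g_inj * \det M.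
Proof.
have -> : mxsub f g M = perm_mx (perm f_inj) *m M *m perm_mx (perm g_inj)^-1.
  by rewrite -row_permE -col_permE; apply/matrixP => i j; rewrite !mxE !permE.
by rewrite !det_mulmx !det_perm odd_permV mulrAC.
Qed.

Lemma det_mxsub_conj (F : comUnitRingType) (n : nat) (f : 'I_n -> 'I_n)
    (f_inj : injective f) (M : 'M[F]_n) :
  \det (mxsub f f M) = \det M.
Proof. by rewrite det_mxsub_perm -expr2 sqrr_sign mul1r. Qed.

Lemma det_schur (F : fieldType) (n1 n2 : nat) (M : 'M[F]_(n1 + n2)) :
  \det (drsubmx M) != 0 ->
  \det M = \det (ulsubmx M - ursubmx M *m invmx (drsubmx M) *m dlsubmx M)
           * \det (drsubmx M).
Proof.
set P := ulsubmx M; set U := ursubmx M; set L := dlsubmx M; set D := drsubmx M.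
move=> detD_neq0; have D_unit : D \in unitmx by rewrite unitmxE unitfE.
have -> : M = block_mx 1%:M (U *m invmx D) 0 1%:M
              *m block_mx (P - U *m invmx D *m L) 0 L D.
  rewrite mulmx_block !mul1mx !mul0mx !add0r subrK -mulmxA (mulVmx D_unit).
  by rewrite mulmx1 submxK.
by rewrite det_mulmx det_ublock det_lblock !det1 !mul1r.
Qed.

Lemma det_mx22 (F : comUnitRingType) (M : 'M[F]_2) :
  \det M = M 0 0 * M 1 1 - M 0 1 * M 1 0.
Proof.
rewrite (expand_det_row _ 0) !big_ord_recl big_ord0 addr0 /cofactor !det_mx11.
rewrite !mxE /= expr0 expr1 !mul1r mulN1r mulrN.
by congr (M _ _ * M _ _ - M _ _ * M _ _); apply: val_inj.
Qed.

(* In a product of two minors reordered by (f, g) and by (g, f) the signs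
   cancel; this handles the two off-diagonal corner minors together. *)
Lemma det_mxsub_pair (F : comUnitRingType) (n : nat) (f g : 'I_n -> 'I_n)
    (f_inj : injective f) (g_inj : injective g) (M N : 'M[F]_n) :
  \det (mxsub f g M) * \det (mxsub g f N) = \det M * \det N.
Proof.
rewrite !det_mxsub_perm; set sf := (-1) ^+ _; set sg := (-1) ^+ _.
have sq_sign (s : bool) : (-1) ^+ s * (-1) ^+ s = 1 :> F by rewrite -expr2 sqrr_sign.
transitivity ((sf * sf) * (sg * sg) * (\det M * \det N)); first by ring.
by rewrite !sq_sign !mul1r.
Qed.

(* If N_ij s^{2j} = s^{2i+1} M_ij entrywise, then N = D1 M D2^-1 for diagonal
   D1, D2 whose determinants differ by s^n, so |N| = s^n |M|. *)
Lemma det_weighted_shift (F : fieldType) (n : nat) (s : F) (M N : 'M[F]_n) :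
  s != 0 -> (forall i j : 'I_n, s ^+ (2 * i + 1) * M i j = N i j * s ^+ (2 * j)) ->
  \det N = s ^+ n * \det M.
Proof.
move=> s_neq0 weight_eq.
pose even_pow := \row_(i < n) s ^+ (2 * i).
pose odd_pow := \row_(i < n) s ^+ (2 * i + 1).
have mx_eq : diag_mx odd_pow *m M = N *m diag_mx even_pow.
  by apply/matrixP => i j; rewrite mul_diag_mx mul_mx_diag !mxE.
have even_prod_neq0 : \prod_(i < n) even_pow 0 i != 0.
  by apply/prodf_neq0 => i _; rewrite mxE expf_neq0.
have odd_prod : \prod_(i < n) odd_pow 0 i = (\prod_(i < n) even_pow 0 i) * s ^+ n.
  rewrite -[in s ^+ n](card_ord n) -prodr_const -big_split /=.
  by apply: eq_bigr => i _; rewrite !mxE exprD.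
have := congr1 determinant mx_eq; rewrite !det_mulmx !det_diag odd_prod.
by move=> det_eq; apply: (mulIf even_prod_neq0); rewrite -det_eq; ring.
Qed.

(* The minor of size m+1 or the whole matrix
   is reordered so that the inner positions come last, as blocks of size
   1 + m or 2 + m. *)
Section Reindexing.
Variable m : nat.

Definition inner_idx (k : 'I_m) : 'I_m.+2 := lift ord_max (lift ord0 k).
Arguments inner_idx : simpl never.

Definition border_idx (a : 'I_m.+2) (i : 'I_(1 + m)) : 'I_m.+2 :=
  match split i with inl _ => a | inr k => inner_idx k end.

Definition corner_idx (i : 'I_(2 + m)) : 'I_m.+2 :=
  match split i with
  | inl c => if c == ord0 then ord0 else ord_max
  | inr k => inner_idx k
  end.

(* In a minor of size m+1 indexed by 0..m: the last position followed by
   0..m-1; this turns the minor without row/column 0 into bordered form. *)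
Definition rot_idx (i : 'I_(1 + m)) : 'I_m.+1 :=
  match split i with inl _ => ord_max | inr k => widen_ord (leqnSn m) k end.

Lemma val_inner_idx (k : 'I_m) : inner_idx k = k.+1 :> nat.
Proof. by rewrite /inner_idx /= /bump leq0n /= ltnS leqNgt ltn_ord. Qed.

Lemma border_idx_lshift (a : 'I_m.+2) (c : 'I_1) : border_idx a (lshift m c) = a.
Proof. by rewrite /border_idx (unsplitK (inl c)). Qed.

Lemma border_idx_rshift (a : 'I_m.+2) (k : 'I_m) :
  border_idx a (rshift 1 k) = inner_idx k.
Proof. by rewrite /border_idx (unsplitK (inr k)). Qed.

Lemma corner_idx_lshift (c : 'I_2) :
  corner_idx (lshift m c) = if c == ord0 then ord0 else ord_max.
Proof. by rewrite /corner_idx (unsplitK (inl c)). Qed.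

Lemma corner_idx_rshift (k : 'I_m) : corner_idx (rshift 2 k) = inner_idx k.
Proof. by rewrite /corner_idx (unsplitK (inr k)). Qed.

Lemma border_idx_max (i : 'I_(1 + m)) :
  border_idx ord_max i = lift ord0 (rot_idx i).
Proof.
rewrite /border_idx /rot_idx; case: (split i) => [_|k]; apply: val_inj.
  by rewrite /= /bump.
by rewrite [LHS]val_inner_idx /= /bump.
Qed.

Lemma border_idx_0 (i : 'I_(1 + m)) : border_idx ord0 i = lift ord_max i.
Proof.
rewrite /border_idx; case: splitP => [c|k] /= i_val; apply: val_inj.
  by rewrite /= /bump i_val (ord1 c).
by rewrite [LHS]val_inner_idx /= /bump i_val leq_add2l leqNgt ltn_ord.
Qed.

Lemma val_corner_idx (i : 'I_(2 + m)) : corner_idx i =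
  (if i == 0 :> nat then 0 else if i == 1 :> nat then m.+1 else i.-1)%N :> nat.
Proof.
rewrite /corner_idx; case: splitP => [c|k] i_val; rewrite i_val.
  by case: c {i_val} => [[|[|c]] //].
by rewrite val_inner_idx.
Qed.

Lemma val_rot_idx (i : 'I_(1 + m)) :
  rot_idx i = (if i == 0 :> nat then m else i.-1)%N :> nat.
Proof. by rewrite /rot_idx; case: splitP => [c|k] ->; rewrite ?(ord1 c). Qed.

Lemma corner_idx_inj : injective corner_idx.
Proof.
move=> i j /(congr1 (@nat_of_ord _)); rewrite !val_corner_idx => eq_ij.
apply/val_inj => /=.
have := ltn_ord i; have := ltn_ord j.
by move: eq_ij; repeat (case: ifP => /eqP ?); lia.
Qed.

Lemma rot_idx_inj : injective rot_idx.
Proof.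
move=> i j /(congr1 (@nat_of_ord _)); rewrite !val_rot_idx => eq_ij.
apply/val_inj => /=.
have := ltn_ord i; have := ltn_ord j.
by move: eq_ij; repeat (case: ifP => /eqP ?); lia.
Qed.
End Reindexing.

Section DesnanotJacobi.
Variables (F : fieldType) (m : nat) (B : 'M[F]_m.+2).

Local Notation inner := (row' ord0 (col' ord0 (row' ord_max (col' ord_max B)))).

Definition inner_row (a : 'I_m.+2) : 'rV[F]_m := \row_k B a (inner_idx k).
Definition inner_col (b : 'I_m.+2) : 'cV[F]_m := \col_k B (inner_idx k) b.

Definition schur_entry (a b : 'I_m.+2) : F :=
  B a b - (inner_row a *m invmx inner *m inner_col b) 0 0.

Definition bordered (a b : 'I_m.+2) : 'M[F]_(1 + m) :=
  mxsub (border_idx a) (border_idx b) B.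

Hypothesis inner_det_neq0 : \det inner != 0.

(* A bordered inner minor has determinant s_ab |D| (1x1 Schur complement). *)
Lemma det_bordered (a b : 'I_m.+2) :
  \det (bordered a b) = schur_entry a b * \det inner.
Proof.
have inner_blk : drsubmx (bordered a b) = inner.
  by apply/matrixP => i j; rewrite !mxE !border_idx_rshift.
have row_blk : ursubmx (bordered a b) = inner_row a.
  by apply/matrixP => i j; rewrite !mxE (ord1 i) border_idx_lshift border_idx_rshift.
have col_blk : dlsubmx (bordered a b) = inner_col b.
  by apply/matrixP => i j; rewrite !mxE (ord1 j) border_idx_lshift border_idx_rshift.
rewrite det_schur inner_blk // row_blk col_blk det_mx11.
rewrite [in LHS]mxE [ulsubmx _ _ _]mxE mxE [bordered _ _ _ _]mxE mxE.
by rewrite !border_idx_lshift.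
Qed.

Lemma det_by_corners :
  \det B = (schur_entry ord0 ord0 * schur_entry ord_max ord_max
            - schur_entry ord0 ord_max * schur_entry ord_max ord0) * \det inner.
Proof.
pose X : 'M_(2 + m) := mxsub (@corner_idx m) (@corner_idx m) B.
have inner_blk : drsubmx X = inner.
  by apply/matrixP => i j; rewrite !mxE !corner_idx_rshift.
have schur_blk c d : (ulsubmx X - ursubmx X *m invmx inner *m dlsubmx X) c d
    = schur_entry (corner_idx (lshift m c)) (corner_idx (lshift m d)).
  rewrite /schur_entry !mxE; congr (_ - _); apply: eq_bigr => k _.
  rewrite !mxE corner_idx_rshift; congr (_ * _); apply: eq_bigr => l _.
  by rewrite !mxE corner_idx_rshift.
have -> : \det B = \det X := esym (det_mxsub_conj (@corner_idx_inj m) B).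
rewrite det_schur inner_blk //.
by rewrite det_mx22 !schur_blk !corner_idx_lshift.
Qed.

Lemma det_minor_last_last :
  \det (row' ord_max (col' ord_max B)) = \det (bordered ord0 ord0).
Proof. by congr (\det _); apply/matrixP => i j; rewrite !mxE !border_idx_0. Qed.

Lemma det_minor_first_first :
  \det (row' ord0 (col' ord0 B)) = \det (bordered ord_max ord_max).
Proof.
rewrite -(det_mxsub_conj (@rot_idx_inj m)); congr (\det _).
by apply/matrixP => i j; rewrite !mxE !border_idx_max.
Qed.

Lemma det_minor_cross :
  \det (row' ord0 (col' ord_max B)) * \det (row' ord_max (col' ord0 B))
  = \det (bordered ord_max ord0) * \det (bordered ord0 ord_max).
Proof.
rewrite -(det_mxsub_pair (@rot_idx_inj m) (@inj_id _)); congr (_ * _); congr (\det _).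
  by apply/matrixP => i j; rewrite !mxE border_idx_max border_idx_0.
by apply/matrixP => i j; rewrite !mxE border_idx_max border_idx_0.
Qed.

Theorem desnanot_jacobi :
  \det B * \det inner =
  \det (row' ord0 (col' ord0 B)) * \det (row' ord_max (col' ord_max B))
  - \det (row' ord0 (col' ord_max B)) * \det (row' ord_max (col' ord0 B)).
Proof.
rewrite det_by_corners det_minor_first_first det_minor_last_last det_minor_cross.
by rewrite !det_bordered; ring.
Qed.
End DesnanotJacobi.

Lemma natdist_succ (i j : nat) : natdist i.+1 j.+1 = natdist i j.
Proof. by rewrite /natdist ltnS subSS. Qed.

Lemma natdist_sq_row_shift (i j : nat) :
  (2 * i + 1 + natdist i j ^ 2 = natdist i.+1 j ^ 2 + 2 * j)%N.
Proof. by rewrite /natdist; case: ifP => ?; case: ifP => ?; nia. Qed.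

Lemma natdist_sym (i j : nat) : natdist i j = natdist j i.
Proof. by rewrite /natdist; case: ifP => ?; case: ifP => ?; lia. Qed.

Section QWeight.
Variables (R : rcfType) (m : nat) (A : 'M[R]_m.+2) (q : R).

(* Deleting both the first row and column, or both the last ones, commutes
   with the weighting, since the differences i - j are unchanged. *)
Lemma qmx_minor_first_first :
  qmx q (minor A ord0 ord0) = row' ord0 (col' ord0 (qmx q A)).
Proof. by apply/matrixP => i j; rewrite !mxE !lift0 natdist_succ. Qed.

Lemma qmx_minor_last_last :
  qmx q (minor A ord_max ord_max) = row' ord_max (col' ord_max (qmx q A)).
Proof. by apply/matrixP => i j; rewrite !mxE !lift_max. Qed.

Lemma qmx_minor1n : qmx q (minor1n A) = minor1n (qmx q A).
Proof. by apply/matrixP => i j; rewrite !mxE !lift_max !lift0 natdist_succ. Qed.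

Hypothesis q_gt0 : 0 < q.

Lemma sqrt_q_neq0 : Num.sqrt q != 0.
Proof. by rewrite gt_eqF // sqrtr_gt0. Qed.

(* Off-diagonal minors: the weights are shifted by one row or column,
   which costs a factor sqrt(q)^(m+1) in the determinant. *)
Lemma det_minor_first_last_qmx :
  \det (row' ord0 (col' ord_max (qmx q A)))
  = Num.sqrt q ^+ m.+1 * \det (qmx q (minor A ord0 ord_max)).
Proof.
apply: det_weighted_shift sqrt_q_neq0 _ => i j.
by rewrite !mxE !lift0 !lift_max mulrA -exprD natdist_sq_row_shift exprD mulrAC.
Qed.

Lemma det_minor_last_first_qmx :
  \det (row' ord_max (col' ord0 (qmx q A)))
  = Num.sqrt q ^+ m.+1 * \det (qmx q (minor A ord_max ord0)).
Proof.
rewrite -det_tr -[X in _ * X]det_tr; apply: det_weighted_shift sqrt_q_neq0 _ => i j.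
rewrite !mxE !lift0 !lift_max mulrA -exprD (natdist_sym j) (natdist_sym j).
by rewrite natdist_sq_row_shift exprD mulrAC.
Qed.

Lemma qmx_cross_term :
  q ^+ m.+1 * \det (qmx q (minor A ord0 ord_max)) * \det (qmx q (minor A ord_max ord0))
  = \det (row' ord0 (col' ord_max (qmx q A)))
    * \det (row' ord_max (col' ord0 (qmx q A))).
Proof.
have q_sq : q = Num.sqrt q ^+ 2 by rewrite sqr_sqrtr // ltW.
rewrite det_minor_first_last_qmx det_minor_last_first_qmx {1}q_sq -exprM mulnC exprM.
by rewrite expr2; ring.
Qed.
End QWeight.

Theorem mainTheorem15 (R : rcfType) (m : nat) (A : 'M[R]_m.+2) (q : R)
  (hq : 0 < q)
  (hden : \det (qmx q (minor1n A)) != 0) :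
  \det (qmx q A) =
    (\det (qmx q (minor A ord0 ord0)) * \det (qmx q (minor A ord_max ord_max))
     - q ^+ m.+1 * \det (qmx q (minor A ord0 ord_max))
                 * \det (qmx q (minor A ord_max ord0)))
    / \det (qmx q (minor1n A)).
Proof.
rewrite qmx_cross_term // qmx_minor_first_first qmx_minor_last_last.
by rewrite -desnanot_jacobi -/(minor1n (qmx q A)) -qmx_minor1n ?mulfK.
Qed.
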